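(* Let $\mathcal{A}=\{A_1,\dots,A_m\}\subseteq\mathbb{R}^{n\times n}$, let $r\ge1$ be an integer, and let $J\subseteq[n]$ be such that for every $i\in[m]$ and every $j\in J$ the $j$-th column of $A_i$ is zero. Define $\mathscr{A}^{(0)}=\{2r\,\mathbf{e}_j: j\in[n]\}$ and, for $s\ge1$, $\mathscr{A}^{(s)}=\mathscr{A}^{(s-1)}\cup\bigcup_{i=1}^m\operatorname{supp}(p_{s-1}(A_i\mathbf{x}))$, where $p_{s-1}(\mathbf{x})=\sum_{\alpha\in\mathscr{A}^{(s-1)}}c_\alpha\mathbf{x}^\alpha$ with coefficients $c_\alpha\in(0,1)$ chosen arbitrarily at each step. Then $\mathscr{A}^{(s)}\subseteq\tilde{\mathbb{N}}^{n-|J|}_{2r}\cup\{\mathbf{b}_j\}_{j\in J}$ for all $s\ge1$.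
   Context: $\mathbf{e}_j$ is the $j$-th unit vector of $\mathbb{N}^n$ and $\mathbf{b}_j=2r\,\mathbf{e}_j$. $\tilde{\mathbb{N}}^{n-|J|}_{2r}=\{\alpha\in\mathbb{N}^n:\sum_i\alpha_i\le 2r,\ \alpha_i=0\text{ for }i\in J\}$. $p(A_i\mathbf{x})$ denotes the polynomial $\mathbf{x}\mapsto p(A_i\mathbf{x})$, and $\operatorname{supp}$ the set of exponents of its monomials with nonzero coefficients. *)

From HB Require Import structures.
From mathcomp Require Import all_boot all_order all_algebra.
From mathcomp Require Import mpoly.
Set Implicit Arguments. Unset Strict Implicit. Unset Printing Implicit Defensive.
Import Order.TTheory GRing.Theory Num.Theory.
Local Open Scope ring_scope.

Definition bvec (n r : nat) (j : 'I_n) : 'X_{1..n} := (U_(j) *+ (2 * r))%MM.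

Definition linsubst (R : realFieldType) (n : nat) (A : 'M[R]_n)
    (p : {mpoly R[n]}) : {mpoly R[n]} :=
  p \mPo [tuple \sum_(l < n) A k l *: 'X_l | k < n].

Definition polyOn (R : realFieldType) (n : nat) (S : seq 'X_{1..n})
    (c : 'X_{1..n} -> R) : {mpoly R[n]} :=
  \sum_(a <- S) c a *: 'X_[a].

(* The exponent sets script-A^(s), as duplicate-free lists; c s alpha is the
   coefficient c_alpha chosen at step s (used to form p_s). *)
Fixpoint expSet (R : realFieldType) (n m r : nat) (A : 'I_m -> 'M[R]_n)
    (c : nat -> 'X_{1..n} -> R) (s : nat) : seq 'X_{1..n} :=
  match s with
  | 0 => undup [seq bvec r j | j <- enum 'I_n]
  | s'.+1 =>
      let S := expSet r A c s' in
      undup (S ++ flatten [seq msupp (linsubst (A i) (polyOn S (c s'))) | i <- enum 'I_m])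
  end.

Definition tildeN (n r : nat) (J : {set 'I_n}) (a : 'X_{1..n}) : Prop :=
  (mdeg a <= 2 * r)%N /\ forall j, j \in J -> a j = 0%N.

From HB Require Import structures.
From mathcomp Require Import all_boot all_order all_algebra.
From mathcomp Require Import mpoly.
Set Implicit Arguments. Unset Strict Implicit. Unset Printing Implicit Defensive.
Import Order.TTheory GRing.Theory Num.Theory.
Local Open Scope ring_scope.

(* Substituting x := A_i x replaces each variable by a linear form in which,
   the J-columns of A_i being zero, no x_j with j in J occurs.  A monomial x^a
   thus becomes a polynomial homogeneous of total degree |a| and of degree 0 in
   the variables of J.  So every new exponent of p_s(A_i x) has the degree of
   an exponent of p_s, at most 2r by induction, and avoids J. *)

Section PartialDegree.
Variables (n : nat) (J : {set 'I_n}).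

Definition mdeg_in (m : 'X_{1..n}) : nat := (\sum_(j in J) m j)%N.

Lemma mdeg_in0 : mdeg_in 0%MM = 0%N.
Proof. by rewrite /mdeg_in big1 // => j _; rewrite mnm0E. Qed.

Lemma mdeg_inD : {morph mdeg_in : m1 m2 / (m1 + m2)%MM >-> (m1 + m2)%N}.
Proof.
by move=> m1 m2; rewrite /mdeg_in -big_split; apply: eq_bigr => j _; rewrite mnmDE.
Qed.

Lemma mdeg_in_eq0P (m : 'X_{1..n}) :
  reflect (forall j, j \in J -> m j = 0%N) (mdeg_in m == 0%N).
Proof.
rewrite /mdeg_in sum_nat_eq0.
by apply: (iffP forall_inP) => H j /H; [move/eqP | move->].
Qed.

Lemma mdeg_in1 (l : 'I_n) : l \notin J -> mdeg_in U_(l) = 0%N.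
Proof.
move=> lJ; apply/eqP/mdeg_in_eq0P => j jJ; rewrite mnm1E.
by case: eqP => // lj; rewrite lj jJ in lJ.
Qed.

End PartialDegree.

HB.instance Definition _ n J :=
  isMeasure.Build n (@mdeg_in n J) (@mdeg_in0 n J) (@mdeg_inD n J).

Section CompHomog.
Variables (R : nzRingType) (n k : nat) (mf : measure k).
Variables (lq : n.-tuple {mpoly R[k]}) (d : 'I_n -> nat).
Hypothesis lq_homog : forall i, tnth lq i \is (d i).-homog for mf.

Lemma comp_mpolyX_homog (m : 'X_{1..n}) :
  'X_[m] \mPo lq \is (\sum_i d i * m i)%N.-homog for mf.
Proof.
rewrite comp_mpolyX; apply: (big_rec2 (fun e p => p \is e.-homog for mf)).
  exact: dhomog1.
by move=> i e p _ hp; apply: dhomogM => //; apply: dhomogMn.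
Qed.

Lemma msupp_comp_mpoly_homog (p : {mpoly R[n]}) m' :
  m' \in msupp (p \mPo lq) ->
  exists2 m, m \in msupp p & mf m' = (\sum_i d i * m i)%N.
Proof.
rewrite comp_mpolyEX => /msupp_sum_le /flatten_mapP [m].
rewrite filter_predT => mp /msuppZ_le m'X; exists m => //.
exact: dhomog_mf (comp_mpolyX_homog m) _ m'X.
Qed.

End CompHomog.

Section LinearSubstitution.
Variables (R : realFieldType) (n : nat) (J : {set 'I_n}) (A : 'M[R]_n).
Hypothesis A_colJ : forall j, j \in J -> forall k, A k j = 0.

Let lq : n.-tuple {mpoly R[n]} := [tuple \sum_(l < n) A k l *: 'X_l | k < n].

Lemma linsubst_form_homog i : tnth lq i \is 1.-homog.
Proof.
rewrite tnth_mktuple; apply: rpred_sum => l _; apply: rpredZ.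
by rewrite dhomogX /= mdeg1.
Qed.

Lemma linsubst_form_homog_in i : tnth lq i \is 0.-homog for (mdeg_in J).
Proof.
rewrite tnth_mktuple; apply: rpred_sum => l _.
have [lJ|lJ] := boolP (l \in J); first by rewrite A_colJ // scale0r rpred0.
by apply: rpredZ; rewrite dhomogX /= mdeg_in1.
Qed.

Lemma msupp_linsubst (p : {mpoly R[n]}) m' : m' \in msupp (linsubst A p) ->
  (exists2 m, m \in msupp p & mdeg m' = mdeg m) /\
  forall j, j \in J -> m' j = 0%N.
Proof.
move=> m'p; split.
  have [m mp ->] := msupp_comp_mpoly_homog linsubst_form_homog m'p.
  by exists m; rewrite // mdegE; apply: eq_bigr => i _; rewrite mul1n.
apply/mdeg_in_eq0P/eqP.
have [m _ ->] := msupp_comp_mpoly_homog linsubst_form_homog_in m'p.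
by rewrite big1.
Qed.

End LinearSubstitution.

Lemma msupp_polyOn (R : realFieldType) n (S : seq 'X_{1..n}) (c : 'X_{1..n} -> R) :
  {subset msupp (polyOn S c) <= S}.
Proof.
move=> m /msupp_sum_le /flatten_mapP [a]; rewrite filter_predT => aS.
by move/msuppZ_le; rewrite msuppX mem_seq1 => /eqP ->.
Qed.

Section ExponentSets.
Variables (n r : nat) (J : {set 'I_n}).

Definition tildeN_bvec (a : 'X_{1..n}) : Prop :=
  tildeN r J a \/ exists2 j : 'I_n, j \in J & a = bvec r j.

Lemma mdeg_bvec (j : 'I_n) : mdeg (bvec r j) = (2 * r)%N.
Proof. by rewrite mdegMn mdeg1 mul1n. Qed.

Lemma tildeN_bvec_mdeg a : tildeN_bvec a -> (mdeg a <= 2 * r)%N.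
Proof. by case=> [[]|[j _ ->]] //; rewrite mdeg_bvec. Qed.

Lemma bvec_tildeN_bvec (j : 'I_n) : tildeN_bvec (bvec r j).
Proof.
have [jJ|jJ] := boolP (j \in J); first by right; exists j.
left; split=> [|k kJ]; first by rewrite mdeg_bvec.
by rewrite mulmnE mnm1E; case: eqP => // jk; rewrite jk kJ in jJ.
Qed.

Variables (R : realFieldType) (m : nat) (A : 'I_m -> 'M[R]_n).
Variable c : nat -> 'X_{1..n} -> R.
Hypothesis A_colJ : forall i j, j \in J -> forall k, A i k j = 0.

Lemma expSet_tildeN_bvec s a : a \in expSet r A c s -> tildeN_bvec a.
Proof.
elim: s a => [|s IHs] a /=; rewrite mem_undup.
  by case/mapP=> j _ ->; apply: bvec_tildeN_bvec.
rewrite mem_cat => /orP[/IHs //|/flatten_mapP [i _ ai]]; left.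
have [[b /msupp_polyOn /IHs /tildeN_bvec_mdeg degb degab] aJ] :=
  msupp_linsubst (A_colJ i) ai.
by split; rewrite // degab.
Qed.

End ExponentSets.

Theorem proposition11p1 (R : realFieldType) (n m r : nat)
    (A : 'I_m -> 'M[R]_n) (J : {set 'I_n})
    (c : nat -> 'X_{1..n} -> R) :
  (1 <= r)%N ->
  (forall (i : 'I_m) (j : 'I_n), j \in J -> forall k : 'I_n, A i k j = 0) ->
  (forall (s : nat) (a : 'X_{1..n}), 0 < c s a < 1) ->
  forall s : nat, (1 <= s)%N ->
  forall a : 'X_{1..n}, a \in expSet r A c s ->
    tildeN r J a \/ exists2 j : 'I_n, j \in J & a = bvec r j.
Proof.
(* The bounds on r, on the coefficients and on s are not needed. *)
move=> _ A_colJ _ s _ a.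
exact: expSet_tildeN_bvec.
Qed.
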